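(* Let $T:\mathbb{R}^n\to\mathbb{R}^n$ be an averaged operator with $\mathrm{Fix}(T)\neq\emptyset$ such that $\mathrm{Id}-T$ is coercive, i.e. $\lim_{\|x\|\to\infty}\|x-T(x)\|=\infty$. Let $\{x^k\}$ be a sequence generated by the Safe-L2O method (described in the context) with fallback operator $T$, any sequence of L2O maps $\{\mathcal{L}_k\}$, any $\alpha\in[0,1)$, and a safeguard sequence $\{\mu_k\}$ satisfying the following condition: if the inequality $\|y^k-T(y^k)\|\le\alpha\mu_k$ holds for infinitely many $k$, then $\mu_k\to 0$. Then $$\lim_{k\to\infty} d_{\mathrm{Fix}(T)}(x^k)=0 .$$ Moreover, if $\{x^k\}$ has exactly one cluster point, then $\{x^k\}$ converges to a point $x^\star\in\mathrm{Fix}(T)$.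
   Context: $\|\cdot\|$ is the Euclidean norm on $\mathbb{R}^n$. $\mathrm{Fix}(T):=\{x\in\mathbb{R}^n: T(x)=x\}$ and $d_C(x):=\inf\{\|x-y\|:y\in C\}$. An operator $Q:\mathbb{R}^n\to\mathbb{R}^n$ is nonexpansive if $\|Qx-Qy\|\le\|x-y\|$ for all $x,y$; an operator $T$ is averaged if $T=(1-\lambda)\mathrm{Id}+\lambda Q$ for some $\lambda\in(0,1)$ and some nonexpansive $Q$. Safe-L2O method: fix maps $\mathcal{L}_k:\mathbb{R}^n\to\mathbb{R}^n$ ($k\in\mathbb{N}$; e.g. $\mathcal{L}_k=\mathcal{L}_{\mathrm{L2O}}(\cdot;\zeta^k)$ for a parameterized family and arbitrary parameters $\zeta^k$), an averaged fallback operator $T$, $\alpha\in[0,1)$, and an initial point $x^1\in\mathbb{R}^n$. Set $\mu_1:=\|x^1-T(x^1)\|$. For $k=1,2,\dots$: compute $y^k:=\mathcal{L}_k(x^k)$; if $\|y^k-T(y^k)\|\le\alpha\mu_k$, set $x^{k+1}:=y^k$, otherwise set $x^{k+1}:=T(x^k)$; then compute a new nonnegative value $\mu_{k+1}$ by some safeguard update rule (which may depend on the iterates generated so far). *)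

(* classical reals. R^n is modelled as real sequences supported on {0,...,n-1}. *)
From Stdlib Require Import Reals Lra Lia ClassicalEpsilon.
Open Scope R_scope.

Definition vec (n : nat) : Type := { v : nat -> R | forall i, (n <= i)%nat -> v i = 0 }.

Definition coord {n : nat} (x : vec n) : nat -> R := proj1_sig x.

Lemma vadd_supp n (u v : vec n) :
  forall i, (n <= i)%nat -> coord u i + coord v i = 0.
Proof. intros i Hi. unfold coord. rewrite (proj2_sig u i Hi), (proj2_sig v i Hi). lra. Qed.

Lemma vscale_supp n (a : R) (u : vec n) :
  forall i, (n <= i)%nat -> a * coord u i = 0.
Proof. intros i Hi. unfold coord. rewrite (proj2_sig u i Hi). lra. Qed.

Definition vadd {n : nat} (u v : vec n) : vec n :=
  exist _ (fun i => coord u i + coord v i) (vadd_supp n u v).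
Definition vscale {n : nat} (a : R) (u : vec n) : vec n :=
  exist _ (fun i => a * coord u i) (vscale_supp n a u).
Definition vsub {n : nat} (u v : vec n) : vec n := vadd u (vscale (-1) v).

Fixpoint sumsq (v : nat -> R) (k : nat) : R :=
  match k with
  | O => 0
  | S k' => sumsq v k' + v k' ^ 2
  end.

Definition vnorm {n : nat} (x : vec n) : R := sqrt (sumsq (coord x) n).

Definition nonexpansive {n : nat} (Q : vec n -> vec n) : Prop :=
  forall x y, vnorm (vsub (Q x) (Q y)) <= vnorm (vsub x y).

Definition averaged {n : nat} (T : vec n -> vec n) : Prop :=
  exists (lam : R) (Q : vec n -> vec n),
    0 < lam < 1 /\ nonexpansive Q /\
    forall x, T x = vadd (vscale (1 - lam) x) (vscale lam (Q x)).

Definition Fix {n : nat} (T : vec n -> vec n) : vec n -> Prop := fun x => T x = x.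

Definition is_inf (D : R -> Prop) (m : R) : Prop :=
  (forall r, D r -> m <= r) /\ (forall m', (forall r, D r -> m' <= r) -> m' <= m).

(* d_C(x) = inf { ||x - y|| : y in C } (chosen by epsilon; the infimum exists
   whenever C is nonempty, which is the only case used) *)
Definition dist_set {n : nat} (C : vec n -> Prop) (x : vec n) : R :=
  epsilon (inhabits 0)
    (is_inf (fun r => exists y, C y /\ r = vnorm (vsub x y))).

Definition coercive_residual {n : nat} (T : vec n -> vec n) : Prop :=
  forall M : R, exists r : R, forall x, vnorm x > r -> vnorm (vsub x (T x)) > M.

Definition cluster_point {n : nat} (x : nat -> vec n) (p : vec n) : Prop :=
  forall eps, eps > 0 -> forall N : nat, exists k, (N <= k)%nat /\ vnorm (vsub (x k) p) < eps.

Definition vconverges {n : nat} (x : nat -> vec n) (p : vec n) : Prop :=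
  forall eps, eps > 0 -> exists N : nat, forall k, (N <= k)%nat -> vnorm (vsub (x k) p) < eps.

(* Safe-L2O iteration, indices shifted so that x 0 = x^1, y k = y^{k+1}, mu k = mu_{k+1} *)
Definition safe_L2O {n : nat} (T : vec n -> vec n) (L : nat -> vec n -> vec n)
  (alpha : R) (x y : nat -> vec n) (mu : nat -> R) : Prop :=
  mu 0%nat = vnorm (vsub (x 0%nat) (T (x 0%nat))) /\
  (forall k, 0 <= mu k) /\
  (forall k, y k = L k (x k)) /\
  (forall k, vnorm (vsub (y k) (T (y k))) <= alpha * mu k -> x (S k) = y k) /\
  (forall k, ~ (vnorm (vsub (y k) (T (y k))) <= alpha * mu k) -> x (S k) = T (x k)).

(* Either L2O steps are accepted infinitely often, or the method is eventually the
   Krasnosel'skii-Mann iteration of T.  In the first case the safeguard forces mu_k -> 0;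
   every step is then an accepted L2O step (residual <= alpha mu_k) or a step of the
   nonexpansive T (residual does not increase), so ||x^k - T x^k|| -> 0, and coercivity of
   Id - T keeps the iterates bounded.  In the second case the Fejer inequality of an averaged
   operator, ||T x - z||^2 + c ||x - T x||^2 <= ||x - z||^2 for z in Fix T, gives boundedness
   and, with the monotone residual, ||x^k - T x^k||^2 = O(1/k).  Bounded iterates with
   vanishing residual have all their cluster points in Fix T (Bolzano-Weierstrass), whence
   d_Fix(x^k) -> 0 and, for a unique cluster point, convergence. *)

From Stdlib Require Import Reals Lra Lia Classical ClassicalEpsilon FunctionalExtensionality ProofIrrelevance Rtopology.
Open Scope R_scope.

Lemma sumsq_nonneg f k : 0 <= sumsq f k.
Proof. induction k; simpl; [lra | nra]. Qed.

Lemma sumsq_ext f g k : (forall i, f i ^ 2 = g i ^ 2) -> sumsq f k = sumsq g k.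
Proof. intros H; induction k; cbn [sumsq]; [reflexivity | rewrite IHk, H; reflexivity]. Qed.

Lemma sumsq_le_combination (f g h w : nat -> R) a b c k :
  (forall i, (i < k)%nat -> f i ^ 2 <= a * g i ^ 2 + b * h i ^ 2 + c * w i ^ 2) ->
  sumsq f k <= a * sumsq g k + b * sumsq h k + c * sumsq w k.
Proof.
  induction k as [|k IH]; intros H; simpl; [lra|].
  assert (Hk := H k (Nat.lt_succ_diag_r k)).
  assert (Hlt := IH (fun i Hi => H i (Nat.lt_lt_succ_r _ _ Hi))).
  lra.
Qed.

Lemma sumsq_term_le f k i : (i < k)%nat -> f i ^ 2 <= sumsq f k.
Proof.
  induction k as [|k IH]; intros Hi; [lia|]. simpl.
  assert (Hk := sumsq_nonneg f k). assert (Hsq := pow2_ge_0 (f k)).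
  destruct (Nat.eq_dec i k) as [->|Hne]; [lra|].
  assert (f i ^ 2 <= sumsq f k) by (apply IH; lia). lra.
Qed.

Lemma sumsq_cv_0 (F : nat -> nat -> R) k :
  (forall i, (i < k)%nat -> Un_cv (fun j => F j i) 0) ->
  Un_cv (fun j => sumsq (F j) k) 0.
Proof.
  induction k as [|k IH]; intros H.
  - intros eps He. exists 0%nat. intros j _. cbn [sumsq]. unfold Rdist. rewrite Rminus_0_r, Rabs_R0. lra.
  - assert (Hsum := CV_plus _ _ _ _ (IH (fun i Hi => H i (Nat.lt_lt_succ_r _ _ Hi)))
                      (CV_mult _ _ _ _ (H k (Nat.lt_succ_diag_r k)) (H k (Nat.lt_succ_diag_r k)))).
    replace (0 + 0 * 0) with 0 in Hsum by ring.
    intros eps He. destruct (Hsum eps He) as [N HN]. exists N. intros j Hj.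
    cbn [sumsq]. replace (F j k ^ 2) with (F j k * F j k) by ring. exact (HN j Hj).
Qed.

Lemma Un_cv_0_nonneg (u : nat -> R) : (forall k, 0 <= u k) ->
  Un_cv u 0 <-> forall eps, eps > 0 -> exists N, forall k, (N <= k)%nat -> u k < eps.
Proof.
  intros Hu. unfold Un_cv, Rdist.
  split; intros H eps He; destruct (H eps He) as [N HN]; exists N; intros k Hk;
    specialize (HN k Hk); rewrite Rminus_0_r, Rabs_pos_eq in *; auto.
Qed.

Lemma not_eventually_frequently (P : nat -> Prop) :
  ~ (exists N, forall k, (N <= k)%nat -> P k) -> forall N, exists k, (N <= k)%nat /\ ~ P k.
Proof.
  intros H N. apply NNPP. intros Hnone. apply H. exists N.
  intros k Hk. apply NNPP. intros HPk. apply Hnone. exists k. auto.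
Qed.

Lemma not_frequently_eventually (P : nat -> Prop) :
  ~ (forall N, exists k, (N <= k)%nat /\ P k) -> exists N, forall k, (N <= k)%nat -> ~ P k.
Proof.
  intros H. apply NNPP. intros Hnone. apply H. intros N. apply NNPP. intros HN. apply Hnone.
  exists N. intros k Hk HPk. apply HN. exists k. auto.
Qed.

Definition increasing (phi : nat -> nat) : Prop := forall j, (phi j < phi (S j))%nat.

Lemma increasing_ge phi : increasing phi -> forall j, (j <= phi j)%nat.
Proof. intros H j; induction j; [lia|]. specialize (H j). lia. Qed.

Lemma increasing_lt phi : increasing phi -> forall a b, (a < b)%nat -> (phi a < phi b)%nat.
Proof. intros H a b Hab. induction Hab; [apply H|]. specialize (H m). lia. Qed.

Lemma increasing_comp phi psi : increasing phi -> increasing psi -> increasing (fun j => phi (psi j)).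
Proof. intros Hphi Hpsi j. apply increasing_lt; auto. Qed.

Lemma Un_cv_subseq u l phi : Un_cv u l -> increasing phi -> Un_cv (fun j => u (phi j)) l.
Proof.
  intros Hu Hphi eps He. destruct (Hu eps He) as [N HN]. exists N. intros j Hj.
  apply HN. assert (Hge := increasing_ge phi Hphi j). lia.
Qed.

Lemma increasing_choice (P : nat -> nat -> Prop) :
  (forall N j, exists k, (N < k)%nat /\ P j k) ->
  exists phi, increasing phi /\ forall j, P j (phi j).
Proof.
  intros H.
  assert (C : forall N j, {k | (N < k)%nat /\ P j k})
    by (intros; apply constructive_indefinite_description; auto).
  exists (fix phi j := match j with
                       | O => proj1_sig (C O O)
                       | S j' => proj1_sig (C (phi j') (S j'))
                       end).
  split.
  - intros j. exact (proj1 (proj2_sig (C _ _))).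
  - intros [|j]; exact (proj2 (proj2_sig (C _ _))).
Qed.

(* [Bolzano_Weierstrass] only yields a cluster value; extract a convergent subsequence from it. *)
Lemma bounded_subseq_cv (u : nat -> R) B : (forall k, -B <= u k <= B) ->
  exists psi l, increasing psi /\ Un_cv (fun j => u (psi j)) l.
Proof.
  intros HB.
  destruct (Bolzano_Weierstrass u (fun c => -B <= c <= B) (compact_P3 (-B) B)) as [l Hl].
  { exact HB. }
  destruct (increasing_choice (fun j k => Rabs (u k - l) < / (INR j + 1))) as [psi [Hpsi Hclose]].
  { intros N j.
    assert (Hpos : 0 < / (INR j + 1)) by (apply Rinv_0_lt_compat; pose proof (pos_INR j); lra).
    destruct (Hl (disc l (mkposreal _ Hpos)) (S N)) as [k [Hk Hd]].
    - exists (mkposreal _ Hpos). intros c Hc. exact Hc.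
    - exists k. split; [lia | exact Hd]. }
  exists psi, l. split; [exact Hpsi|].
  intros eps He. destruct (INR_archimed eps 1 He) as [N HN].
  exists N. intros j Hj. unfold Rdist.
  eapply Rlt_le_trans; [apply Hclose|].
  assert (HNj : INR N <= INR j) by (apply le_INR; exact Hj).
  apply (Rmult_le_reg_l (INR j + 1)); [pose proof (pos_INR j); lra|].
  rewrite Rinv_r by (pose proof (pos_INR j); lra). nra.
Qed.

Definition sqnorm {n : nat} (v : vec n) : R := sumsq (coord v) n.

Definition residual {n : nat} (T : vec n -> vec n) (v : vec n) : R := vnorm (vsub v (T v)).

Definition eventually_bounded {n : nat} (x : nat -> vec n) : Prop :=
  exists B K, forall k, (K <= k)%nat -> sqnorm (x k) <= B.

Section Vectors.
Context {n : nat}.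
Implicit Types a b u v z : vec n.

Lemma coord_vadd u v i : coord (vadd u v) i = coord u i + coord v i.
Proof. reflexivity. Qed.

Lemma coord_vscale r v i : coord (vscale r v) i = r * coord v i.
Proof. reflexivity. Qed.

Lemma coord_vsub u v i : coord (vsub u v) i = coord u i - coord v i.
Proof. unfold vsub. rewrite coord_vadd, coord_vscale. ring. Qed.

Lemma vec_ext u v : (forall i, coord u i = coord v i) -> u = v.
Proof.
  destruct u as [f Hf], v as [g Hg]; unfold coord; simpl; intros H.
  assert (f = g) by (apply functional_extensionality; exact H). subst g.
  f_equal. apply proof_irrelevance.
Qed.

Lemma sqnorm_nonneg v : 0 <= sqnorm v.
Proof. apply sumsq_nonneg. Qed.

Lemma vnorm_nonneg v : 0 <= vnorm v.
Proof. apply sqrt_pos. Qed.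

Lemma vnorm_sqr v : vnorm v ^ 2 = sqnorm v.
Proof. apply pow2_sqrt, sqnorm_nonneg. Qed.

Lemma vnorm_lt_iff v e : 0 < e -> vnorm v < e <-> sqnorm v < e ^ 2.
Proof.
  intros He. rewrite <- vnorm_sqr. pose proof (vnorm_nonneg v) as Hv.
  split; intros H; [nra|]. destruct (Rlt_or_le (vnorm v) e); [assumption | nra].
Qed.

Lemma sqnorm_le_of_vnorm_le u v : vnorm u <= vnorm v -> sqnorm u <= sqnorm v.
Proof. intros H. rewrite <- !vnorm_sqr. pose proof (vnorm_nonneg u). nra. Qed.

Lemma vnorm_le_of_sqnorm_le u v : sqnorm u <= sqnorm v -> vnorm u <= vnorm v.
Proof. apply sqrt_le_1_alt. Qed.

Lemma coord_sqr_le v i : coord v i ^ 2 <= sqnorm v.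
Proof.
  destruct (Compare_dec.lt_dec i n) as [Hi|Hi]; [apply sumsq_term_le, Hi|].
  unfold coord at 1. rewrite (proj2_sig v i ltac:(lia)).
  pose proof (sqnorm_nonneg v). lra.
Qed.

Lemma eq_of_sqnorm_vsub_le0 u v : sqnorm (vsub u v) <= 0 -> u = v.
Proof.
  intros H. apply vec_ext. intros i.
  assert (Hi := coord_sqr_le (vsub u v) i). rewrite coord_vsub in Hi. nra.
Qed.

Lemma sqnorm_vsub_comm u v : sqnorm (vsub u v) = sqnorm (vsub v u).
Proof. apply sumsq_ext. intros i. rewrite !coord_vsub. ring. Qed.

Lemma sqnorm_vsub3_le (a b c d : vec n) :
  sqnorm (vsub a d) <= 3 * (sqnorm (vsub a b) + sqnorm (vsub b c) + sqnorm (vsub c d)).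
Proof.
  enough (H : sqnorm (vsub a d) <= 3 * sqnorm (vsub a b) + 3 * sqnorm (vsub b c) + 3 * sqnorm (vsub c d))
    by lra.
  apply sumsq_le_combination. intros i _. rewrite !coord_vsub.
  set (p := coord a i - coord b i). set (q := coord b i - coord c i). set (r := coord c i - coord d i).
  replace (coord a i - coord d i) with (p + q + r) by (unfold p, q, r; ring).
  pose proof (pow2_ge_0 (p - q)). pose proof (pow2_ge_0 (q - r)). pose proof (pow2_ge_0 (p - r)).
  nra.
Qed.

Lemma sqnorm_le_vsub u v : sqnorm u <= 2 * sqnorm (vsub u v) + 2 * sqnorm v.
Proof.
  enough (H : sqnorm u <= 2 * sqnorm (vsub u v) + 2 * sqnorm v + 0 * sqnorm v) by lra.
  apply sumsq_le_combination. intros i _. rewrite coord_vsub.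
  pose proof (pow2_ge_0 (coord u i - 2 * coord v i)). nra.
Qed.

Lemma averaged_sqnorm_gap (T : vec n -> vec n) : averaged T ->
  exists c, 0 < c /\ forall a b,
    sqnorm (vsub (T a) (T b)) + c * sqnorm (vsub (vsub a (T a)) (vsub b (T b)))
    <= sqnorm (vsub a b).
Proof.
  intros [lam [Q [Hlam [HQ HT]]]].
  exists ((1 - lam) / lam). split; [apply Rdiv_lt_0_compat; lra|]. intros a b.
  assert (HQab : lam * sqnorm (vsub (Q a) (Q b)) <= lam * sqnorm (vsub a b))
    by (apply Rmult_le_compat_l; [lra | apply sqnorm_le_of_vnorm_le, HQ]).
  (* with d = a - b and e = Q a - Q b, coordinatewise
     ((1-lam) d + lam e)^2 + (1-lam)/lam (lam (d - e))^2 = (1-lam) d^2 + lam e^2 *)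
  assert (Hid : sqnorm (vsub (T a) (T b)) <=
     (1 - lam) * sqnorm (vsub a b) + lam * sqnorm (vsub (Q a) (Q b))
     + - ((1 - lam) / lam) * sqnorm (vsub (vsub a (T a)) (vsub b (T b)))).
  { apply sumsq_le_combination. intros i _. rewrite !coord_vsub, !HT.
    rewrite !coord_vadd, !coord_vscale. apply Req_le. field. lra. }
  lra.
Qed.

Lemma averaged_nonexpansive (T : vec n -> vec n) : averaged T -> nonexpansive T.
Proof.
  intros HT a b. destruct (averaged_sqnorm_gap T HT) as [c [Hc Hgap]].
  apply vnorm_le_of_sqnorm_le. specialize (Hgap a b).
  assert (0 <= c * sqnorm (vsub (vsub a (T a)) (vsub b (T b))))
    by (apply Rmult_le_pos; [lra | apply sqnorm_nonneg]).
  lra.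
Qed.

Lemma averaged_fejer (T : vec n -> vec n) : averaged T ->
  exists c, 0 < c /\ forall z v, Fix T z ->
    sqnorm (vsub (T v) z) + c * sqnorm (vsub v (T v)) <= sqnorm (vsub v z).
Proof.
  intros HT. destruct (averaged_sqnorm_gap T HT) as [c [Hc Hgap]].
  exists c. split; [exact Hc|]. intros z v Hz.
  specialize (Hgap v z). unfold Fix in Hz. rewrite Hz in Hgap.
  replace (sqnorm (vsub (vsub v (T v)) (vsub z z))) with (sqnorm (vsub v (T v))) in Hgap;
    [exact Hgap|].
  apply sumsq_ext. intros i. rewrite !coord_vsub. ring.
Qed.

Lemma residual_T_le (T : vec n -> vec n) v : nonexpansive T -> residual T (T v) <= residual T v.
Proof. intros HT. exact (HT v (T v)). Qed.

End Vectors.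

Section ClusterPoints.
Context {n : nat}.

Lemma truncate_supp (l : nat -> R) :
  forall i, (n <= i)%nat -> (if Compare_dec.lt_dec i n then l i else 0) = 0.
Proof. intros i Hi. destruct (Compare_dec.lt_dec i n); [lia | reflexivity]. Qed.

Definition truncate (l : nat -> R) : vec n := exist _ _ (truncate_supp l).

Lemma coord_truncate l i : (i < n)%nat -> coord (truncate l) i = l i.
Proof. intros Hi. unfold coord, truncate; simpl. destruct (Compare_dec.lt_dec i n); [reflexivity | lia]. Qed.

Lemma bounded_coords_subseq_cv (z : nat -> vec n) B :
  (forall k i, coord (z k) i ^ 2 <= B) ->
  forall m, exists phi (l : nat -> R), increasing phi /\
    forall i, (i < m)%nat -> Un_cv (fun j => coord (z (phi j)) i) (l i).
Proof.
  intros HB m. induction m as [|m [phi [l [Hphi Hl]]]].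
  - exists (fun j => j), (fun _ => 0). split; [intros j; lia | intros i Hi; lia].
  - destruct (bounded_subseq_cv (fun j => coord (z (phi j)) m) (B + 1)) as [psi [lm [Hpsi Hcv]]].
    { intros j. specialize (HB (phi j) m). nra. }
    exists (fun j => phi (psi j)), (fun i => if Nat.eq_dec i m then lm else l i).
    split; [apply increasing_comp; assumption|].
    intros i Hi. destruct (Nat.eq_dec i m) as [->|Hne]; [exact Hcv|].
    apply (Un_cv_subseq (fun j => coord (z (phi j)) i)); [apply Hl; lia | exact Hpsi].
Qed.

Lemma bounded_cluster_point (z : nat -> vec n) B :
  (forall k, sqnorm (z k) <= B) -> exists p, cluster_point z p.
Proof.
  intros HB.
  destruct (bounded_coords_subseq_cv z B
              (fun k i => Rle_trans _ _ _ (coord_sqr_le (z k) i) (HB k)) n) as [phi [l [Hphi Hl]]].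
  exists (truncate l).
  assert (Hcv : Un_cv (fun j => sqnorm (vsub (z (phi j)) (truncate l))) 0).
  { apply (sumsq_cv_0 (fun j => coord (vsub (z (phi j)) (truncate l)))).
    intros i Hi eps He. destruct (Hl i Hi eps He) as [N HN]. exists N. intros j Hj.
    unfold Rdist in *. rewrite coord_vsub, coord_truncate, Rminus_0_r by exact Hi. exact (HN j Hj). }
  rewrite Un_cv_0_nonneg in Hcv by (intros j; apply sqnorm_nonneg).
  intros eps He N. destruct (Hcv (eps ^ 2) ltac:(nra)) as [J HJ].
  exists (phi (Nat.max J N)). split.
  - pose proof (increasing_ge phi Hphi (Nat.max J N)). lia.
  - apply vnorm_lt_iff; [exact He | apply HJ; lia].
Qed.

Lemma cluster_point_within (x : nat -> vec n) (Q : nat -> Prop) :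
  eventually_bounded x -> (forall N, exists k, (N <= k)%nat /\ Q k) ->
  exists p, forall eps, eps > 0 -> forall N,
    exists k, (N <= k)%nat /\ Q k /\ vnorm (vsub (x k) p) < eps.
Proof.
  intros [B [K HB]] HQ.
  destruct (increasing_choice (fun _ k => (K <= k)%nat /\ Q k)) as [phi [Hphi HP]].
  { intros N _. destruct (HQ (S N + K)%nat) as [k [Hk HQk]].
    exists k. split; [lia | split; [lia | exact HQk]]. }
  destruct (bounded_cluster_point (fun j => x (phi j)) B) as [p Hp].
  { intros j. apply HB, HP. }
  exists p. intros eps He N. destruct (Hp eps He N) as [j [Hj Hclose]].
  exists (phi j). pose proof (increasing_ge phi Hphi j).
  split; [lia | split; [apply HP | exact Hclose]].
Qed.

Lemma cluster_point_fixed (T : vec n -> vec n) (x : nat -> vec n) p :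
  nonexpansive T -> Un_cv (fun k => residual T (x k)) 0 -> cluster_point x p -> Fix T p.
Proof.
  intros HT Hres Hp. unfold Fix. symmetry. apply eq_of_sqnorm_vsub_le0.
  apply Rnot_lt_le. intros Hpos. set (e := sqnorm (vsub p (T p))) in *.
  set (delta := sqrt (e / 12)).
  assert (Hdelta : 0 < delta) by (apply sqrt_lt_R0; lra).
  assert (Hdelta2 : delta ^ 2 = e / 12) by (apply pow2_sqrt; lra).
  rewrite Un_cv_0_nonneg in Hres by (intros k; apply vnorm_nonneg).
  destruct (Hres delta Hdelta) as [K HK].
  destruct (Hp delta Hdelta K) as [k [Hk Hclose]].
  apply vnorm_lt_iff in Hclose; [|exact Hdelta].
  assert (Hresk := HK k Hk). unfold residual in Hresk. apply vnorm_lt_iff in Hresk; [|exact Hdelta].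
  assert (Htri := sqnorm_vsub3_le p (x k) (T (x k)) (T p)).
  assert (HTk := sqnorm_le_of_vnorm_le _ _ (HT (x k) p)).
  rewrite (sqnorm_vsub_comm p (x k)) in Htri.
  fold e in Htri. lra.
Qed.

Lemma unique_cluster_point_cv (x : nat -> vec n) p :
  eventually_bounded x -> (forall q, cluster_point x q -> q = p) -> vconverges x p.
Proof.
  intros Hb Huniq eps He. apply NNPP. intros Hfar.
  destruct (cluster_point_within x (fun k => ~ vnorm (vsub (x k) p) < eps) Hb
              (not_eventually_frequently _ Hfar)) as [q Hq].
  assert (q = p) as ->.
  { apply Huniq. intros e He' N. destruct (Hq e He' N) as [k [Hk [_ Hclose]]]. exists k. auto. }
  destruct (Hq eps He 0%nat) as [k [_ [Hfar_k Hclose]]]. contradiction.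
Qed.

Lemma dist_set_is_inf (C : vec n -> Prop) v : (exists z, C z) ->
  is_inf (fun r => exists y, C y /\ r = vnorm (vsub v y)) (dist_set C v).
Proof.
  intros [z Hz]. unfold dist_set. apply epsilon_spec.
  destruct (completeness (fun r => exists y, C y /\ - r = vnorm (vsub v y))) as [m [Hub Hlub]].
  - exists 0. intros r [y [_ Hy]]. pose proof (vnorm_nonneg (vsub v y)). lra.
  - exists (- vnorm (vsub v z)). exists z. split; [exact Hz | ring].
  - exists (- m). split.
    + intros r [y [Hy ->]]. enough (- vnorm (vsub v y) <= m) by lra.
      apply Hub. exists y. split; [exact Hy | ring].
    + intros m' Hm'. enough (m <= - m') by lra.
      apply Hlub. intros r [y [Hy Hr]]. specialize (Hm' (- r) (ex_intro _ y (conj Hy Hr))). lra.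
Qed.

Lemma dist_set_le (C : vec n -> Prop) v y : C y -> dist_set C v <= vnorm (vsub v y).
Proof. intros Hy. apply (dist_set_is_inf C v (ex_intro _ y Hy)). exists y. auto. Qed.

Lemma dist_set_nonneg (C : vec n -> Prop) v : (exists z, C z) -> 0 <= dist_set C v.
Proof.
  intros HC. apply (dist_set_is_inf C v HC). intros r [y [_ ->]]. apply vnorm_nonneg.
Qed.

Lemma dist_Fix_cv_0 (T : vec n -> vec n) (x : nat -> vec n) :
  nonexpansive T -> (exists z, Fix T z) ->
  Un_cv (fun k => residual T (x k)) 0 -> eventually_bounded x ->
  Un_cv (fun k => dist_set (Fix T) (x k)) 0.
Proof.
  intros HT HF Hres Hb.
  apply Un_cv_0_nonneg; [intros k; apply dist_set_nonneg, HF|].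
  intros eps He. apply NNPP. intros Hfar.
  destruct (cluster_point_within x (fun k => ~ dist_set (Fix T) (x k) < eps) Hb
              (not_eventually_frequently _ Hfar)) as [p Hp].
  assert (Hfix : Fix T p).
  { apply (cluster_point_fixed T x p HT Hres).
    intros e He' N. destruct (Hp e He' N) as [k [Hk [_ Hclose]]]. exists k. auto. }
  destruct (Hp eps He 0%nat) as [k [_ [Hfar_k Hclose]]].
  apply Hfar_k. eapply Rle_lt_trans; [apply dist_set_le, Hfix | exact Hclose].
Qed.

End ClusterPoints.

Section Iterations.
Context {n : nat}.
Variables (T : vec n -> vec n) (x : nat -> vec n).

Lemma coercive_eventually_bounded :
  coercive_residual T -> Un_cv (fun k => residual T (x k)) 0 -> eventually_bounded x.
Proof.
  intros Hco Hres. destruct (Hco 1) as [r Hr].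
  rewrite Un_cv_0_nonneg in Hres by (intros k; apply vnorm_nonneg).
  destruct (Hres 1 ltac:(lra)) as [K HK].
  exists (r ^ 2), K. intros k Hk.
  assert (Hxr : vnorm (x k) <= r).
  { apply Rnot_lt_le. intros Hgt. specialize (Hr _ Hgt). specialize (HK k Hk).
    unfold residual in HK. lra. }
  rewrite <- vnorm_sqr. pose proof (vnorm_nonneg (x k)). nra.
Qed.

Section FallbackTail.
Variable N : nat.
Hypothesis Hav : averaged T.
Hypothesis Htail : forall k, (N <= k)%nat -> x (S k) = T (x k).

(* Fejer monotonicity plus monotonicity of the residual along the orbit of [T]. *)
Lemma fallback_tail_energy z : Fix T z -> exists c, 0 < c /\ forall m,
  sqnorm (vsub (x (N + m)%nat) z) + c * INR m * sqnorm (vsub (x (N + m)%nat) (T (x (N + m)%nat)))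
  <= sqnorm (vsub (x N) z).
Proof.
  intros Hz. destruct (averaged_fejer T Hav) as [c [Hc Hfejer]].
  exists c. split; [exact Hc|].
  induction m as [|m IH]; [rewrite Nat.add_0_r; cbn [INR]; lra|].
  rewrite Nat.add_succ_r, S_INR, (Htail (N + m)%nat) by lia.
  set (v := x (N + m)%nat) in *.
  assert (Hstep := Hfejer z v Hz).
  assert (Hmono : sqnorm (vsub (T v) (T (T v))) <= sqnorm (vsub v (T v)))
    by (apply sqnorm_le_of_vnorm_le, residual_T_le, averaged_nonexpansive, Hav).
  assert (c * (INR m + 1) * sqnorm (vsub (T v) (T (T v)))
          <= c * (INR m + 1) * sqnorm (vsub v (T v)))
    by (apply Rmult_le_compat_l; [pose proof (pos_INR m); nra | exact Hmono]).
  lra.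
Qed.

Lemma fallback_tail_residual_cv_0 :
  (exists z, Fix T z) -> Un_cv (fun k => residual T (x k)) 0.
Proof.
  intros [z Hz]. destruct (fallback_tail_energy z Hz) as [c [Hc Henergy]].
  rewrite Un_cv_0_nonneg by (intros k; apply vnorm_nonneg).
  intros eps He. set (d := sqnorm (vsub (x N) z)).
  assert (Hceps : c * eps ^ 2 > 0) by (apply Rmult_lt_0_compat; [exact Hc | apply pow_lt, He]).
  destruct (INR_archimed (c * eps ^ 2) d Hceps) as [m0 Hm0].
  exists (N + m0)%nat. intros k Hk. unfold residual. apply vnorm_lt_iff; [exact He|].
  replace k with (N + (k - N))%nat in * by lia.
  specialize (Henergy (k - N)%nat). fold d in Henergy.
  assert (Hm : INR m0 <= INR (k - N)) by (apply le_INR; lia).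
  set (r := sqnorm (vsub (x (N + (k - N))%nat) (T (x (N + (k - N))%nat)))) in *.
  pose proof (sqnorm_nonneg (vsub (x (N + (k - N))%nat) z)).
  apply Rnot_le_lt. intros Hge.
  assert (c * eps ^ 2 * INR m0 <= c * INR (k - N) * r).
  { replace (c * INR (k - N) * r) with (c * (INR (k - N) * r)) by ring.
    rewrite Rmult_assoc. apply Rmult_le_compat_l; [lra|].
    pose proof (pos_INR m0). rewrite Rmult_comm. apply Rmult_le_compat; nra. }
  lra.
Qed.

Lemma fallback_tail_bounded : (exists z, Fix T z) -> eventually_bounded x.
Proof.
  intros [z Hz]. destruct (fallback_tail_energy z Hz) as [c [Hc Henergy]].
  exists (2 * sqnorm (vsub (x N) z) + 2 * sqnorm z), N. intros k Hk.
  replace k with (N + (k - N))%nat by lia.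
  specialize (Henergy (k - N)%nat).
  assert (0 <= c * INR (k - N) * sqnorm (vsub (x (N + (k - N))%nat) (T (x (N + (k - N))%nat))))
    by (apply Rmult_le_pos; [apply Rmult_le_pos; [lra | apply pos_INR] | apply sqnorm_nonneg]).
  pose proof (sqnorm_le_vsub (x (N + (k - N))%nat) z). lra.
Qed.

End FallbackTail.

Section SafeL2O.
Variables (L : nat -> vec n -> vec n) (alpha : R) (y : nat -> vec n) (mu : nat -> R).
Hypothesis Hsafe : safe_L2O T L alpha x y mu.

Definition l2o_accepted (k : nat) : Prop := residual T (y k) <= alpha * mu k.

Lemma safe_L2O_residual_step : nonexpansive T ->
  forall k, residual T (x (S k)) <= Rmax (alpha * mu k) (residual T (x k)).
Proof.
  intros HT k. destruct Hsafe as [_ [_ [_ [Hacc Hrej]]]].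
  destruct (classic (l2o_accepted k)) as [Hk|Hk].
  - rewrite (Hacc k Hk). eapply Rle_trans; [exact Hk | apply Rmax_l].
  - rewrite (Hrej k Hk). eapply Rle_trans; [apply residual_T_le, HT | apply Rmax_r].
Qed.

(* Once an L2O step is accepted below the safeguard, neither kind of step can push the
   residual back above the current bound. *)
Lemma safe_L2O_residual_cv_0 : nonexpansive T -> alpha <= 1 -> Un_cv mu 0 ->
  (forall N, exists k, (N <= k)%nat /\ l2o_accepted k) ->
  Un_cv (fun k => residual T (x k)) 0.
Proof.
  intros HT Halpha Hmu Hinf. destruct Hsafe as [_ [Hmu_nonneg [_ [Hacc _]]]].
  rewrite Un_cv_0_nonneg in Hmu by exact Hmu_nonneg.
  rewrite Un_cv_0_nonneg by (intros k; apply vnorm_nonneg).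
  intros eps He. destruct (Hmu eps He) as [N HN].
  assert (Hbound : forall k, (N <= k)%nat -> alpha * mu k < eps).
  { intros k Hk. specialize (HN k Hk). specialize (Hmu_nonneg k). nra. }
  destruct (Hinf N) as [k0 [Hk0 Hacc0]].
  assert (Hafter : forall m, residual T (x (S k0 + m)%nat) < eps).
  { induction m as [|m IH].
    - rewrite Nat.add_0_r, (Hacc k0 Hacc0).
      exact (Rle_lt_trans _ _ _ Hacc0 (Hbound k0 Hk0)).
    - rewrite Nat.add_succ_r. eapply Rle_lt_trans; [apply safe_L2O_residual_step, HT|].
      apply Rmax_lub_lt; [apply Hbound; lia | exact IH]. }
  exists (S k0). intros k Hk. replace k with (S k0 + (k - S k0))%nat by lia. apply Hafter.
Qed.

Lemma safe_L2O_eventually_fallback :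
  ~ (forall N, exists k, (N <= k)%nat /\ l2o_accepted k) ->
  exists N, forall k, (N <= k)%nat -> x (S k) = T (x k).
Proof.
  intros Hfin. destruct Hsafe as [_ [_ [_ [_ Hrej]]]].
  destruct (not_frequently_eventually _ Hfin) as [N HN].
  exists N. intros k Hk. exact (Hrej k (HN k Hk)).
Qed.

End SafeL2O.
End Iterations.

Theorem theorem1 (n : nat) (T : vec n -> vec n) (L : nat -> vec n -> vec n)
  (alpha : R) (x y : nat -> vec n) (mu : nat -> R) :
  averaged T ->
  (exists z, Fix T z) ->
  coercive_residual T ->
  0 <= alpha < 1 ->
  safe_L2O T L alpha x y mu ->
  ((forall N : nat, exists k, (N <= k)%nat /\ vnorm (vsub (y k) (T (y k))) <= alpha * mu k) ->
     Un_cv mu 0) ->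
  Un_cv (fun k => dist_set (Fix T) (x k)) 0 /\
  ((exists p, cluster_point x p /\ forall q, cluster_point x q -> q = p) ->
     exists xs, Fix T xs /\ vconverges x xs).
Proof.
  intros Hav HF Hco Halpha Hsafe Hsafeguard.
  assert (HT := averaged_nonexpansive T Hav).
  assert (Hconv : Un_cv (fun k => residual T (x k)) 0 /\ eventually_bounded x).
  { destruct (classic (forall N, exists k, (N <= k)%nat /\ l2o_accepted T alpha y mu k))
      as [Hinf | Hfin].
    - assert (Hres := safe_L2O_residual_cv_0 T x L alpha y mu Hsafe HT
                        ltac:(lra) (Hsafeguard Hinf) Hinf).
      exact (conj Hres (coercive_eventually_bounded T x Hco Hres)).
    - destruct (safe_L2O_eventually_fallback T x L alpha y mu Hsafe Hfin) as [N Htail].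
      exact (conj (fallback_tail_residual_cv_0 T x N Hav Htail HF)
                  (fallback_tail_bounded T x N Hav Htail HF)). }
  destruct Hconv as [Hres Hbounded]. split.
  - exact (dist_Fix_cv_0 T x HT HF Hres Hbounded).
  - intros [p [Hp Huniq]]. exists p. split.
    + exact (cluster_point_fixed T x p HT Hres Hp).
    + exact (unique_cluster_point_cv x p Hbounded Huniq).
Qed.
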